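(* Fix a user $i$, a horizon $T\in\mathbb{N}$, integrable real random variables $X_i(t)$ and $Y_i(t)$ with $Y_i(t)\ge 0$ almost surely ($t=1,\dots,T$), a constant $C_{\text{a},i}\ge 0$, and real constants $\pi_{\text{PV}},\pi_{\text{in}},\pi_{\text{out}},\pi_{\text{gas}}$. For $a_i\ge 0$ define $$J_i(a_i,C_{\text{a},i})=a_i\pi_{\text{PV}}+\sum_{t=1}^{T}\Big\{-\pi_{\text{in}}\,\mathbb{E}\big[\max\{a_iY_i(t)-X_i(t),0\}\big]+\pi_{\text{out}}\,\mathbb{E}\big[\min\{\max\{X_i(t)-a_iY_i(t),0\},\,C_{\text{a},i}\}\big]+\pi_{\text{gas}}\,\mathbb{E}\big[\max\{X_i(t)-a_iY_i(t)-C_{\text{a},i},0\}\big]\Big\}.$$ If $\pi_{\text{gas}}\ge\pi_{\text{out}}\ge\pi_{\text{in}}$, then $J_i$ is convex with respect to $a_i$.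
   Context: This is the cost of user $i$ in a joint-storage scenario: $a_i$ is the area of PV panels, $X_i(t)$ the daily power consumption, $Y_i(t)$ the PV generation per unit area on day $t$, $C_{\text{a},i}$ the maximal daily amount of power user $i$ may buy from a manager, $\pi_{\text{in}}$ the price at which the user sells surplus power to the manager (possibly negative), $\pi_{\text{out}}$ the price at which the manager sells power to the user, $\pi_{\text{gas}}$ the unit cost of fuel-cell generation, $\pi_{\text{PV}}$ the unit price of PV panels. *)

From HB Require Import structures.
From mathcomp Require Import all_boot all_order all_algebra.
From mathcomp Require Import all_classical all_reals all_analysis.
Set Implicit Arguments. Unset Strict Implicit. Unset Printing Implicit Defensive.
Import Order.TTheory GRing.Theory Num.Theory.
Local Open Scope ring_scope.

Definition Ereal {d} {Omega : measurableType d} {R : realType}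
  (P : probability Omega R) (f : Omega -> R) : R := fine ('E_P[f])%E.

(* Cost J_i(a, C_a) of user i; days t = 1..T are indexed by t : 'I_T. *)
Definition Jcost {d} {Omega : measurableType d} {R : realType}
  (P : probability Omega R) (T : nat) (X Y : 'I_T -> Omega -> R)
  (piPV piin piout pigas Ca : R) (a : R) : R :=
  a * piPV +
  \sum_(t < T)
    ( - piin * Ereal P (fun w => Num.max (a * Y t w - X t w) 0)
      + piout * Ereal P (fun w => Num.min (Num.max (X t w - a * Y t w) 0) Ca)
      + pigas * Ereal P (fun w => Num.max (X t w - a * Y t w - Ca) 0)).

From HB Require Import structures.
From mathcomp Require Import all_boot all_order all_algebra.
From mathcomp Require Import all_classical all_reals all_analysis.
From mathcomp Require Import ring lra.
Set Implicit Arguments. Unset Strict Implicit. Unset Printing Implicit Defensive.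
Import Order.TTheory GRing.Theory Num.Theory.
Local Open Scope ring_scope.

(* With the net demand z = X - a Y, the identities (-z)^+ = z^+ - z and
   min(z^+, C) = z^+ - (z - C)^+ rewrite the daily cost as
   pi_in z + (pi_out - pi_in) z^+ + (pi_gas - pi_out) (z - C)^+.
   Under pi_gas >= pi_out >= pi_in this is an affine function of a plus
   nonnegative multiples of hinge functions of a, which are convex pointwise;
   expectation and summation over days preserve convexity. *)

Section convexity.
Variable R : realFieldType.
Implicit Types (f g : R -> R) (k u v z c : R).

Definition convex_fun f := forall a b l, 0 <= l <= 1 ->
  f (l * a + (1 - l) * b) <= l * f a + (1 - l) * f b.

Lemma eq_convex_fun f g : f =1 g -> convex_fun g -> convex_fun f.
Proof. by move=> fg cg a b l hl; rewrite !fg; exact: cg. Qed.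

Lemma convex_fun_cst k : convex_fun (fun=> k).
Proof. by move=> a b l _; lra. Qed.

Lemma convex_fun_affine u v : convex_fun (fun a => u + v * a).
Proof. by move=> a b l _; nra. Qed.

Lemma convex_funD f g : convex_fun f -> convex_fun g ->
  convex_fun (fun a => f a + g a).
Proof.
move=> cf cg a b l hl; have := cf a b l hl; have := cg a b l hl; lra.
Qed.

Lemma convex_funZ k f : 0 <= k -> convex_fun f -> convex_fun (fun a => k * f a).
Proof.
move=> k0 cf a b l hl; rewrite mulrCA [_ * (k * _)]mulrCA -mulrDr.
exact: ler_wpM2l (cf a b l hl).
Qed.

Lemma convex_fun_sum (I : Type) (r : seq I) (F : I -> R -> R) :
  (forall i, convex_fun (F i)) -> convex_fun (fun a => \sum_(i <- r) F i a).
Proof.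
move=> cF a b l hl; rewrite !mulr_sumr -big_split /=.
by apply: ler_sum => i _; exact: cF.
Qed.

Lemma convex_fun_max f g : convex_fun f -> convex_fun g ->
  convex_fun (fun a => Num.max (f a) (g a)).
Proof.
move=> cf cg a b l /[dup] hl /andP[l0 l1]; rewrite ge_max.
have lef (x y : R) : Num.max x y >= x by rewrite le_max lexx.
have leg (x y : R) : Num.max x y >= y by rewrite le_max lexx orbT.
apply/andP; split; [apply: le_trans (cf a b l hl) _ | apply: le_trans (cg a b l hl) _];
  by apply: lerD; apply: ler_wpM2l; rewrite ?subr_ge0 ?lef ?leg.
Qed.

Lemma maxrN0 z : Num.max (- z) 0 = Num.max z 0 - z.
Proof. by case: (leP z 0) => hz; case: (leP (- z) 0) => hz'; lra. Qed.

Lemma minr_maxr0 z c : 0 <= c ->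
  Num.min (Num.max z 0) c = Num.max z 0 - Num.max (z - c) 0.
Proof.
move=> c0; case: (leP z 0) => h1; case: (leP (z - c) 0) => h2;
  case: (leP z c) => h3; try case: (leP 0 c) => h4; lra.
Qed.

End convexity.

Section real_expectation.
Context d (Omega : measurableType d) (R : realType) (P : probability Omega R).
Local Notation integrable f := (P.-integrable setT (EFin \o f)).
Implicit Types f g : Omega -> R.

Lemma integral_Ereal f : integrable f -> (\int[P]_w (f w)%:E)%E = (Ereal P f)%:E.
Proof. by move=> hf; rewrite /Ereal unlock fineK //; exact: integrable_fin_num. Qed.

Lemma integrable_lincomb k1 k2 f g : integrable f -> integrable g ->
  integrable (fun w => k1 * f w + k2 * g w).
Proof.
move=> hf hg; apply: eq_integrable (integrableD measurableT
  (integrableZl measurableT k1 hf) (integrableZl measurableT k2 hg)) => //.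
Qed.

Lemma Ereal_lincomb k1 k2 f g : integrable f -> integrable g ->
  Ereal P (fun w => k1 * f w + k2 * g w) = k1 * Ereal P f + k2 * Ereal P g.
Proof.
move=> hf hg; apply: EFin_inj; rewrite -integral_Ereal; last exact: integrable_lincomb.
rewrite EFinD !EFinM -!integral_Ereal // -(integralZl measurableT hf).
rewrite -(integralZl measurableT hg) -integralD //; exact: integrableZl.
Qed.

Lemma ErealB f g : integrable f -> integrable g ->
  Ereal P (fun w => f w - g w) = Ereal P f - Ereal P g.
Proof.
move=> hf hg; have := Ereal_lincomb 1 (-1) hf hg; rewrite mul1r mulN1r => <-.
by congr Ereal; apply/funext => w; rewrite mul1r mulN1r.
Qed.

Lemma le_Ereal f g : integrable f -> integrable g -> (forall w, f w <= g w) ->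
  Ereal P f <= Ereal P g.
Proof.
move=> hf hg fg; rewrite -lee_fin -!integral_Ereal //.
by apply: le_integral => // w _; rewrite lee_fin.
Qed.

Lemma integrable_maxr0 f : integrable f -> integrable (fun w => Num.max (f w) 0).
Proof.
move=> hf; apply: eq_integrable (integrable_funepos measurableT hf) => // w _.
by rewrite funeposE /= -EFin_max.
Qed.

Lemma convex_fun_Ereal (F : R -> Omega -> R) :
  (forall a, integrable (F a)) -> (forall w, convex_fun (F^~ w)) ->
  convex_fun (fun a => Ereal P (F a)).
Proof.
move=> iF cF a b l hl; rewrite -Ereal_lincomb //.
by apply: le_Ereal => //; [exact: integrable_lincomb | move=> w; exact: cF].
Qed.

End real_expectation.

Definition shortfall d (Omega : measurableType d) (R : realType)
  (x y : Omega -> R) (c a : R) (w : Omega) : R := Num.max (x w - a * y w - c) 0.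

Section daily_cost.
Context d (Omega : measurableType d) (R : realType) (P : probability Omega R).
Local Notation integrable f := (P.-integrable setT (EFin \o f)).
Variables (x y : Omega -> R) (piin piout pigas C : R).
Hypotheses (hx : integrable x) (hy : integrable y) (C_ge0 : 0 <= C).

Lemma integrable_net_demand a : integrable (fun w => x w - a * y w).
Proof.
apply: eq_integrable (integrable_lincomb 1 (- a) hx hy) => // w _ /=.
by rewrite mul1r mulNr.
Qed.

Lemma integrable_shortfall c a : integrable (shortfall x y c a).
Proof.
apply: integrable_maxr0; apply: eq_integrable (integrable_lincomb 1 (-1)
  (integrable_net_demand a) (finite_measure_integrable_cst P c measurableT)) => // w _ /=.
by rewrite mul1r mulN1r.
Qed.

Lemma convex_fun_Ereal_shortfall c : convex_fun (fun a => Ereal P (shortfall x y c a)).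
Proof.
apply: convex_fun_Ereal => [a|w]; first exact: integrable_shortfall.
apply: convex_fun_max; last exact: convex_fun_cst.
by apply: (eq_convex_fun _ (convex_fun_affine (x w - c) (- y w))) => a; ring.
Qed.

Lemma daily_cost_shortfall a :
  - piin * Ereal P (fun w => Num.max (a * y w - x w) 0)
  + piout * Ereal P (fun w => Num.min (Num.max (x w - a * y w) 0) C)
  + pigas * Ereal P (fun w => Num.max (x w - a * y w - C) 0)
  = piin * Ereal P x - piin * Ereal P y * a
    + ((piout - piin) * Ereal P (shortfall x y 0 a)
       + (pigas - piout) * Ereal P (shortfall x y C a)).
Proof.
have s00 w : shortfall x y 0 a w = Num.max (x w - a * y w) 0.
  by rewrite /shortfall subr0.
have Esurplus : Ereal P (fun w => Num.max (a * y w - x w) 0)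
    = Ereal P (shortfall x y 0 a) - Ereal P (fun w => x w - a * y w).
  rewrite -ErealB ?integrable_shortfall ?integrable_net_demand //.
  by congr Ereal; apply/funext => w; rewrite s00 -maxrN0 opprB.
have Ebought : Ereal P (fun w => Num.min (Num.max (x w - a * y w) 0) C)
    = Ereal P (shortfall x y 0 a) - Ereal P (shortfall x y C a).
  rewrite -ErealB ?integrable_shortfall //.
  by congr Ereal; apply/funext => w; rewrite s00 minr_maxr0.
have Enet : Ereal P (fun w => x w - a * y w) = Ereal P x - a * Ereal P y.
  have := Ereal_lincomb 1 (- a) hx hy; rewrite mul1r mulNr => <-.
  by congr Ereal; apply/funext => w; rewrite mul1r mulNr.
by rewrite Esurplus Ebought Enet /shortfall; ring.
Qed.

End daily_cost.

Lemma Jcost_shortfall d (Omega : measurableType d) (R : realType)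
    (P : probability Omega R) (T : nat) (X Y : 'I_T -> Omega -> R)
    (Ca piPV piin piout pigas : R) :
  (forall t, P.-integrable setT (EFin \o X t)) ->
  (forall t, P.-integrable setT (EFin \o Y t)) -> 0 <= Ca ->
  Jcost P X Y piPV piin piout pigas Ca =1 fun a =>
    \sum_(t < T) piin * Ereal P (X t)
    + (piPV - \sum_(t < T) piin * Ereal P (Y t)) * a
    + \sum_(t < T) ((piout - piin) * Ereal P (shortfall (X t) (Y t) 0 a)
                    + (pigas - piout) * Ereal P (shortfall (X t) (Y t) Ca a)).
Proof.
move=> hX hY C_ge0 a; rewrite /Jcost.
under eq_bigr => t _ do rewrite daily_cost_shortfall //.
by rewrite big_split /= sumrB -mulr_suml; ring.
Qed.

Theorem lemma2 (d : measure_display) (Omega : measurableType d) (R : realType)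
  (P : probability Omega R) (T : nat) (X Y : 'I_T -> Omega -> R)
  (Ca piPV piin piout pigas : R) :
  (forall t, measurable_fun setT (X t)) ->
  (forall t, measurable_fun setT (Y t)) ->
  (forall t, P.-integrable setT (EFin \o X t)) ->
  (forall t, P.-integrable setT (EFin \o Y t)) ->
  (forall t, {ae P, forall w, 0 <= Y t w}) ->
  0 <= Ca ->
  pigas >= piout -> piout >= piin ->
  forall (a b l : R), 0 <= a -> 0 <= b -> 0 <= l <= 1 ->
    Jcost P X Y piPV piin piout pigas Ca (l * a + (1 - l) * b)
    <= l * Jcost P X Y piPV piin piout pigas Ca a
       + (1 - l) * Jcost P X Y piPV piin piout pigas Ca b.
Proof.
(* Measurability is part of integrability, and convexity holds on the whole
   real line. *)
move=> _ _ hX hY _ C_ge0 gas_out out_in a b l _ _ hl.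
suff : convex_fun (Jcost P X Y piPV piin piout pigas Ca) by apply.
apply: eq_convex_fun (Jcost_shortfall piPV piin piout pigas hX hY C_ge0) _.
apply: convex_funD; first exact: convex_fun_affine.
apply: convex_fun_sum => t; apply: convex_funD;
  (apply: convex_funZ; first lra); exact: convex_fun_Ereal_shortfall (hX t) (hY t) _.
Qed.
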